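(* Let $A$ be a finite set with $|A|=n$. Consider the set of all bijections $f:A\to A$ for which there exists a binary operation $*$ on $A$ such that $(A,* )$ is a cyclic group and $f$ is an automorphism of $(A,* )$. Then these bijections realise at most $\phi(n)$ distinct cycle structures.
   Context: $\phi$ is Euler's totient function. The cycle structure of a bijection $f$ of a finite set is the description of how many cycles of each length $f$ has (a cycle being a sequence $a_1,\dots,a_m$ of distinct elements with $f(a_j)=a_{j+1}$ for $j<m$ and $f(a_m)=a_1$, of length $m$; fixed points are cycles of length $1$). *)

From mathcomp Require Import all_boot all_fingroup.
Set Implicit Arguments. Unset Strict Implicit. Unset Printing Implicit Defensive.

Definition is_cyclic_group (A : Type) (op : A -> A -> A) : Prop :=
  exists (e g : A),
    associative op /\ left_id e op /\ right_id e op /\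
    (forall x, exists y, op y x = e /\ op x y = e) /\
    (forall x, exists k : nat, x = iter k (op g) e).

(* f is an automorphism of (A, op) (bijectivity is built into {perm A}). *)
Definition is_automorphism (A : Type) (op : A -> A -> A) (f : A -> A) : Prop :=
  forall x y, f (op x y) = op (f x) (f y).

Definition cyclic_aut (A : finType) (f : {perm A}) : Prop :=
  exists op : A -> A -> A, is_cyclic_group op /\ is_automorphism op f.

Definition cycle_count (A : finType) (s : {perm A}) (k : nat) : nat :=
  #|[set X in porbits s | #|X| == k]|.

(* Cycle structure: the number of cycles of each length 1..|A|
   (cycles are never longer than |A|). *)
Definition cycle_structure (A : finType) (s : {perm A}) : seq nat :=
  [seq cycle_count s k | k <- iota 1 #|A|].

From mathcomp Require Import all_boot all_fingroup.

Set Implicit Arguments.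
Unset Strict Implicit.
Unset Printing Implicit Defensive.

(* A cyclic group of order n is generated by some g, and k |-> g^k identifies
   it with Z/n.  An automorphism f sends g to some g^a, so it acts on exponents
   as multiplication by a, and a is a unit mod n because f is onto.  The cycle
   structure of f is then that of j |-> a j on Z/n, so it is determined by one
   of the phi(n) units a. *)

Definition orbit_type (T : finType) (h : T -> T) : seq nat :=
  [seq #|order_set h k| %/ k | k <- iota 1 #|T|].

Section CycleStructure.

Variables (T : finType) (s : {perm T}).

Lemma card_porbit x : #|porbit s x| = fingraph.order s x.
Proof.
apply: eq_card => y; apply/porbitP/idP => [[i ->] | /iter_findex <-].
  by rewrite permX; apply: fconnect_iter.
by exists (findex s x y); rewrite permX.
Qed.

Lemma cycle_count_order_set k : cycle_count s k * k = #|order_set s k|.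
Proof.
have -> : #|order_set s k| = #|[set x | #|porbit s x| == k]|.
  by apply: eq_card => x; rewrite !inE card_porbit.
symmetry; apply: card_uniform_partition.
  by move=> X; rewrite inE => /andP[_ /eqP].
apply/and3P; split.
- apply/eqP/setP => x; rewrite inE; apply/bigcupP/idP.
    case=> _ /setIdP[/imsetP[y _ ->] /eqP <-].
    by rewrite -eq_porbit_mem => /eqP->.
  by move=> xk; exists (porbit s x); rewrite ?porbit_id // inE imset_f.
- apply/trivIsetP => _ _ /setIdP[/imsetP[x _ ->] _] /setIdP[/imsetP[y _ ->] _].
  apply: contraR => /pred0Pn[z /andP[zx zy]].
  by rewrite /= -!eq_porbit_mem in zx zy; rewrite -(eqP zx) (eqP zy).
- rewrite inE; apply/andP => -[/imsetP[x _ x0] _].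
  by have := porbit_id s x; rewrite -x0 inE.
Qed.

Lemma cycle_structure_orbit_type : cycle_structure s = orbit_type s.
Proof.
apply/eq_in_map => k; rewrite mem_iota => /andP[k_gt0 _].
by rewrite -cycle_count_order_set mulnK.
Qed.

End CycleStructure.

Section Semiconjugacy.

Variables (A B : finType) (f : A -> A) (h : B -> B) (beta : B -> A).
Hypothesis beta_bij : bijective beta.
Hypothesis fbeta : forall j, f (beta j) = beta (h j).

Let beta_inj : injective beta := bij_inj beta_bij.

Lemma iter_semiconj i j : iter i f (beta j) = beta (iter i h j).
Proof. by elim: i => //= i ->; rewrite fbeta. Qed.

Lemma order_semiconj j : fingraph.order f (beta j) = fingraph.order h j.
Proof.
rewrite /fingraph.order -(card_imset _ beta_inj); apply: eq_card => y.
apply/idP/imsetP => [/iter_findex <- | [z]].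
  exists (iter (findex f (beta j) y) h j); last exact: iter_semiconj.
  by rewrite inE fconnect_iter.
by rewrite inE => /iter_findex <- ->; rewrite -iter_semiconj; apply: fconnect_iter.
Qed.

Lemma orbit_type_semiconj : orbit_type f = orbit_type h.
Proof.
rewrite /orbit_type (bij_eq_card beta_bij); apply/eq_map => k.
rewrite -(card_imset (order_set h k) beta_inj); congr (_ %/ _).
apply: eq_card => y; have [gamma _ betaK] := beta_bij.
by rewrite -[y]betaK (mem_imset _ _ beta_inj) !inE order_semiconj.
Qed.

End Semiconjugacy.

Definition mul_mod (n a : nat) (j : 'I_n.+1) : 'I_n.+1 :=
  Ordinal (ltn_pmod (a * j) (ltn0Sn n)).
Arguments mul_mod : clear implicits.

Section CyclicGroup.

Variables (A : finType) (op : A -> A -> A) (e g : A) (n : nat).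
Hypotheses (opA : associative op) (op1x : left_id e op) (opx1 : right_id e op).
Hypothesis opV : forall x, exists y, op y x = e /\ op x y = e.
Hypothesis gen : forall x, exists k : nat, x = iter k (op g) e.
Hypothesis cardA : #|A| = n.+1.

Local Notation pw k := (iter k (op g) e).

Lemma op_inj x : injective (op x).
Proof.
move=> y z xyz; have [x' [x'x _]] := opV x.
by rewrite -(op1x y) -(op1x z) -x'x -!opA xyz.
Qed.

Lemma pwD i j : pw (i + j) = op (pw i) (pw j).
Proof. by elim: i => [|i IHi]; rewrite ?op1x //= IHi opA. Qed.

Lemma order_gen : fingraph.order (op g) e = n.+1.
Proof.
rewrite -cardA; apply: eq_card => x.
by have [k ->] := gen x; rewrite !inE fconnect_iter.
Qed.

Lemma pw_mod k : pw k = pw (k %% n.+1).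
Proof.
have pw_order : pw n.+1 = e by rewrite -{1}order_gen (iter_order (@op_inj g)).
have pwM q : pw (q * n.+1) = e.
  by elim: q => // q IHq; rewrite mulSn pwD pw_order op1x.
by rewrite {1}(divn_eq k n.+1) pwD pwM op1x.
Qed.

Lemma pw_inj_mod i j : pw i = pw j -> i = j %[mod n.+1].
Proof.
rewrite pw_mod [pw j]pw_mod => /(congr1 (findex (op g) e)).
by rewrite !findex_iter ?order_gen ?ltn_pmod.
Qed.

Lemma pw_bij : bijective (fun j : 'I_n.+1 => pw j).
Proof.
apply: inj_card_bij; last by rewrite cardA card_ord.
by move=> i j /pw_inj_mod; rewrite !modn_small // => /val_inj.
Qed.

Variable f : {perm A}.
Hypothesis fM : is_automorphism op f.

Lemma aut_pw : exists a, forall k, f (pw k) = pw (a * k).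
Proof.
have fe : f e = e by apply: (@op_inj (f e)); rewrite -fM op1x opx1.
have [a fg] := gen (f g); exists a.
elim=> [|k IHk]; first by rewrite muln0 /= fe.
by rewrite /= fM IHk fg -pwD mulnS.
Qed.

Lemma aut_pw_coprime a : (forall k, f (pw k) = pw (a * k)) -> coprime n.+1 a.
Proof.
move=> fpw; have [k fk] : exists k, f (pw k) = pw 1.
  by have [k pk] := gen ((f^-1)%g (pw 1)); exists k; rewrite -pk permKV.
rewrite fpw in fk; have /pw_inj_mod ak1 := fk.
have : coprime n.+1 (a * k).
  by rewrite -coprime_modr ak1 coprime_modr coprimen1.
by rewrite coprimeMr => /andP[].
Qed.

Lemma cyclic_aut_mul_mod : exists a,
  [/\ a < n.+1, coprime n.+1 a &
      forall j : 'I_n.+1, f (pw j) = pw (mul_mod n a j)].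
Proof.
have [a fpw] := aut_pw; exists (a %% n.+1); split.
- by rewrite ltn_mod.
- by rewrite coprime_modr aut_pw_coprime.
- by move=> j; rewrite fpw pw_mod [RHS]pw_mod /= modn_mod modnMml.
Qed.

End CyclicGroup.

Theorem corollary2p2 (A : finType) :
  exists L : seq (seq nat),
    size L <= totient #|A| /\
    (forall f : {perm A}, cyclic_aut f -> cycle_structure f \in L).
Proof.
case cardA: #|A| => [|n].
  by exists [::]; split=> // f [op [[e _] _]]; rewrite (cardD1 e) in cardA.
exists [seq orbit_type (mul_mod n a) | a <- iota 0 n.+1 & coprime n.+1 a].
split.
  rewrite size_map size_filter totient_count_coprime -sum1_count big_mkcond.
  by apply: leq_sum => a _; case: coprime.
move=> f [op [[e [g [opA [op1x [opx1 [opV gen]]]]]] fM]].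
have [a [a_lt a_coprime fpw]] :=
  cyclic_aut_mul_mod opA op1x opx1 opV gen cardA fM.
have pw_bij := pw_bij opA op1x opV gen cardA.
rewrite cycle_structure_orbit_type (orbit_type_semiconj pw_bij fpw).
by apply: map_f; rewrite mem_filter a_coprime mem_iota add0n a_lt.
Qed.
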